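(* In a closed coherent differential summable resource category $\mathcal L$ (see context), let $f\in\mathcal L_!(Z\&X,Y)$. Then $D(\mathrm{Cur}\,f)=\mathrm{Cur}(D_0f)$ in $\mathcal L_!(SZ,X\Rightarrow SY)$.
   Context: $\mathcal L$ is a symmetric monoidal closed category with finite products ($\&$, projections $p_i$, terminal $\top$), with a resource comonad $(!,\mathrm{der},\mathrm{dig})$ and Seely isomorphisms $m^0,m^2$ (a model of linear logic). Kleisli category $\mathcal L_!$: $\mathcal L_!(X,Y)=\mathcal L(!X,Y)$, $g\circ_!f=g\circ!f\circ\mathrm{dig}_X$; $\lambda(h)=h\circ\mathrm{der}_X$ for $h\in\mathcal L(X,Y)$. $\mathcal L_!$ is cartesian closed with $X\Rightarrow Y=\,!X\multimap Y$, evaluation $\mathrm{Ev}^{X,Y}\in\mathcal L_!((X\Rightarrow Y)\&X,Y)$ and currying $\mathrm{Cur}$. $\mathcal L$ has zero morphisms and a summability structure $(S,\pi_0,\pi_1,\sigma)$ with $\pi_0,\pi_1$ jointly monic, satisfying the axioms of Ehrhard's coherent differentiation; $\iota_0=\langle\mathrm{id},0\rangle$ (the unique morphism with $\pi_0\iota_0=\mathrm{id}$, $\pi_1\iota_0=0$); $S$ preserves products strictly. $\mathcal L$ has a coherent differential structure: a natural $\partial_X\in\mathcal L(!SX,S!X)$ satisfying the axioms of coherent differentiation (local: $\pi_0\partial=!\pi_0$; linearity; chain rule: $S\mathrm{der}\circ\partial=\mathrm{der}$, $S\mathrm{dig}\circ\partial=\partial\circ!\partial\circ\mathrm{dig}$;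 compatibility with $\&$; Schwarz). $D$ is the endofunctor of $\mathcal L_!$ with $DX=SX$, $Df=Sf\circ\partial_X$; $\psi^0_{X_0,X_1}=\lambda(SX_0\&\iota_0)\in\mathcal L_!(SX_0\&X_1,S(X_0\&X_1))$ and $D_0f=Df\circ_!\psi^0$. It is assumed (axiom of functional summability) that $\mathrm{Cur}(D\mathrm{Ev}^{X,Y}\circ_!\psi^0_{X\Rightarrow Y,X})\in\mathcal L_!(S(X\Rightarrow Y),X\Rightarrow SY)$ is an isomorphism, and it is treated as the identity, i.e. $S(X\Rightarrow Y)$ and $X\Rightarrow SY$ are identified. *)

Set Implicit Arguments.
Unset Strict Implicit.

Record CDSRC := {
  Obj : Type;
  Hom : Obj -> Obj -> Type;
  comp : forall {X Y Z : Obj}, Hom Y Z -> Hom X Y -> Hom X Z;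
  idm : forall {X : Obj}, Hom X X;
  comp_assoc : forall X Y Z W (f : Hom X Y) (g : Hom Y Z) (h : Hom Z W),
      comp h (comp g f) = comp (comp h g) f;
  comp_idl : forall X Y (f : Hom X Y), comp idm f = f;
  comp_idr : forall X Y (f : Hom X Y), comp f idm = f;

  tens : Obj -> Obj -> Obj;
  tensM : forall {A B C D : Obj}, Hom A B -> Hom C D -> Hom (tens A C) (tens B D);
  tensM_id : forall A C, tensM (idm (X:=A)) (idm (X:=C)) = idm;
  tensM_comp : forall A B B' C D D' (f : Hom A B) (f' : Hom B B') (g : Hom C D) (g' : Hom D D'),
      tensM (comp f' f) (comp g' g) = comp (tensM f' g') (tensM f g);
  unitO : Obj;
  alpha : forall {A B C : Obj}, Hom (tens (tens A B) C) (tens A (tens B C));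
  alphai : forall {A B C : Obj}, Hom (tens A (tens B C)) (tens (tens A B) C);
  alpha_iso1 : forall A B C, comp (alphai (A:=A) (B:=B) (C:=C)) alpha = idm;
  alpha_iso2 : forall A B C, comp (alpha (A:=A) (B:=B) (C:=C)) alphai = idm;
  alpha_nat : forall A A' B B' C C' (f : Hom A A') (g : Hom B B') (h : Hom C C'),
      comp alpha (tensM (tensM f g) h) = comp (tensM f (tensM g h)) alpha;
  lunit : forall {A : Obj}, Hom (tens unitO A) A;
  luniti : forall {A : Obj}, Hom A (tens unitO A);
  lunit_iso1 : forall A, comp (luniti (A:=A)) lunit = idm;
  lunit_iso2 : forall A, comp (lunit (A:=A)) luniti = idm;
  lunit_nat : forall A B (f : Hom A B), comp lunit (tensM idm f) = comp f lunit;
  runit : forall {A : Obj}, Hom (tens A unitO) A;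
  runiti : forall {A : Obj}, Hom A (tens A unitO);
  runit_iso1 : forall A, comp (runiti (A:=A)) runit = idm;
  runit_iso2 : forall A, comp (runit (A:=A)) runiti = idm;
  runit_nat : forall A B (f : Hom A B), comp runit (tensM f idm) = comp f runit;
  gam : forall {A B : Obj}, Hom (tens A B) (tens B A);
  gam_invol : forall A B, comp (gam (A:=B) (B:=A)) gam = idm;
  gam_nat : forall A A' B B' (f : Hom A A') (g : Hom B B'),
      comp gam (tensM f g) = comp (tensM g f) gam;
  pentagon : forall A B C D,
      comp alpha alpha
      = comp (tensM idm alpha) (comp alpha (tensM alpha idm))
        :> Hom (tens (tens (tens A B) C) D) (tens A (tens B (tens C D)));
  triangle : forall A B,
      comp (tensM idm lunit) alpha = tensM runit idm
        :> Hom (tens (tens A unitO) B) (tens A B);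
  hexagon : forall A B C,
      comp alpha (comp gam alpha)
      = comp (tensM idm gam) (comp alpha (tensM gam idm))
        :> Hom (tens (tens A B) C) (tens B (tens C A));

  lolli : Obj -> Obj -> Obj;
  ev : forall {A B : Obj}, Hom (tens (lolli A B) A) B;
  cur : forall {C A B : Obj}, Hom (tens C A) B -> Hom C (lolli A B);
  cur_beta : forall C A B (f : Hom (tens C A) B), comp ev (tensM (cur f) idm) = f;
  cur_eta : forall C A B (g : Hom C (lolli A B)), cur (comp ev (tensM g idm)) = g;

  withO : Obj -> Obj -> Obj;
  p0 : forall {X Y : Obj}, Hom (withO X Y) X;
  p1 : forall {X Y : Obj}, Hom (withO X Y) Y;
  pair : forall {Z X Y : Obj}, Hom Z X -> Hom Z Y -> Hom Z (withO X Y);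
  pair_p0 : forall Z X Y (f : Hom Z X) (g : Hom Z Y), comp p0 (pair f g) = f;
  pair_p1 : forall Z X Y (f : Hom Z X) (g : Hom Z Y), comp p1 (pair f g) = g;
  pair_eta : forall Z X Y (h : Hom Z (withO X Y)), pair (comp p0 h) (comp p1 h) = h;
  top : Obj;
  term : forall {X : Obj}, Hom X top;
  term_uniq : forall X (f : Hom X top), f = term;

  bang : Obj -> Obj;
  bangM : forall {X Y : Obj}, Hom X Y -> Hom (bang X) (bang Y);
  bangM_id : forall X, bangM (idm (X:=X)) = idm;
  bangM_comp : forall X Y Z (f : Hom X Y) (g : Hom Y Z),
      bangM (comp g f) = comp (bangM g) (bangM f);
  der : forall {X : Obj}, Hom (bang X) X;
  dig : forall {X : Obj}, Hom (bang X) (bang (bang X));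
  der_nat : forall X Y (f : Hom X Y), comp der (bangM f) = comp f der;
  dig_nat : forall X Y (f : Hom X Y), comp dig (bangM f) = comp (bangM (bangM f)) dig;
  comonad_1 : forall X, comp der dig = idm :> Hom (bang X) (bang X);
  comonad_2 : forall X, comp (bangM der) dig = idm :> Hom (bang X) (bang X);
  comonad_3 : forall X,
      comp dig dig = comp (bangM dig) dig :> Hom (bang X) (bang (bang (bang X)));

  m0 : Hom unitO (bang top);
  m0i : Hom (bang top) unitO;
  m0_iso1 : comp m0i m0 = idm;
  m0_iso2 : comp m0 m0i = idm;
  m2 : forall {X Y : Obj}, Hom (tens (bang X) (bang Y)) (bang (withO X Y));
  m2i : forall {X Y : Obj}, Hom (bang (withO X Y)) (tens (bang X) (bang Y));
  m2_iso1 : forall X Y, comp (m2i (X:=X) (Y:=Y)) m2 = idm;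
  m2_iso2 : forall X Y, comp (m2 (X:=X) (Y:=Y)) m2i = idm;
  m2_nat : forall X X' Y Y' (f : Hom X X') (g : Hom Y Y'),
      comp m2 (tensM (bangM f) (bangM g)) = comp (bangM (pair (comp f p0) (comp g p1))) m2;
  m2_assoc : forall X Y Z,
      comp (bangM (pair (comp p0 p0) (pair (comp p1 p0) p1))) (comp m2 (tensM m2 idm))
      = comp m2 (comp (tensM idm m2) alpha)
        :> Hom (tens (tens (bang X) (bang Y)) (bang Z)) (bang (withO X (withO Y Z)));
  m2_unitl : forall X,
      comp (bangM p1) (comp m2 (tensM m0 idm)) = lunit :> Hom (tens unitO (bang X)) (bang X);
  m2_unitr : forall X,
      comp (bangM p0) (comp m2 (tensM idm m0)) = runit :> Hom (tens (bang X) unitO) (bang X);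
  m2_sym : forall X Y,
      comp (bangM (pair p1 p0)) m2 = comp m2 gam
        :> Hom (tens (bang X) (bang Y)) (bang (withO Y X));
  seely_dig : forall X Y,
      comp (bangM (pair (bangM p0) (bangM p1))) (comp dig m2) = comp m2 (tensM dig dig)
        :> Hom (tens (bang X) (bang Y)) (bang (withO (bang X) (bang Y)));
  seely_dig0 : comp (bangM term) (comp dig m0) = m0;

  zero : forall {X Y : Obj}, Hom X Y;
  zero_l : forall X Y Z (f : Hom X Y), comp (zero (X:=Y) (Y:=Z)) f = zero;
  zero_r : forall X Y Z (g : Hom Y Z), comp g (zero (X:=X) (Y:=Y)) = zero;

  S : Obj -> Obj;
  SM : forall {X Y : Obj}, Hom X Y -> Hom (S X) (S Y);
  SM_id : forall X, SM (idm (X:=X)) = idm;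
  SM_comp : forall X Y Z (f : Hom X Y) (g : Hom Y Z), SM (comp g f) = comp (SM g) (SM f);
  pi0 : forall {X : Obj}, Hom (S X) X;
  pi1 : forall {X : Obj}, Hom (S X) X;
  sig : forall {X : Obj}, Hom (S X) X;
  pi0_nat : forall X Y (f : Hom X Y), comp pi0 (SM f) = comp f pi0;
  pi1_nat : forall X Y (f : Hom X Y), comp pi1 (SM f) = comp f pi1;
  sig_nat : forall X Y (f : Hom X Y), comp sig (SM f) = comp f sig;
  pi_jmonic : forall X Y (h h' : Hom X (S Y)),
      comp pi0 h = comp pi0 h' -> comp pi1 h = comp pi1 h' -> h = h';
  iota0 : forall {X : Obj}, Hom X (S X);
  iota0_p0 : forall X, comp pi0 (iota0 (X:=X)) = idm;
  iota0_p1 : forall X, comp pi1 (iota0 (X:=X)) = zero;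
  S_zero : forall X, comp sig (iota0 (X:=X)) = idm;
  S_com : forall X, exists c : Hom (S X) (S X),
      comp pi0 c = pi1 /\ comp pi1 c = pi0 /\ comp sig c = sig;
  S_witness : forall X Y (f0 f1 a b : Hom X (S Y)),
      comp pi0 a = comp pi0 f0 -> comp pi1 a = comp pi0 f1 ->
      comp pi0 b = comp pi1 f0 -> comp pi1 b = comp pi1 f1 ->
      exists h : Hom X (S (S Y)), comp pi0 h = f0 /\ comp pi1 h = f1;
  (* (S-assoc): if (f00,f01), (f10,f11) and (f00+f01, f10+f11) are summable,
     then so are (f00,f10), (f01,f11) and (f00+f10, f01+f11), with equal sums *)
  S_assoc : forall X Y (h0 h1 k : Hom X (S Y)),
      comp pi0 k = comp sig h0 -> comp pi1 k = comp sig h1 ->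
      exists h : Hom X (S (S Y)),
        comp pi0 (comp pi0 h) = comp pi0 h0 /\ comp pi1 (comp pi0 h) = comp pi0 h1 /\
        comp pi0 (comp pi1 h) = comp pi1 h0 /\ comp pi1 (comp pi1 h) = comp pi1 h1 /\
        comp sig (comp (SM sig) h) = comp sig k;
  S_lolli : forall Z X Y (f0 f1 : Hom (tens Z X) Y),
      (exists h : Hom (tens Z X) (S Y), comp pi0 h = f0 /\ comp pi1 h = f1) <->
      (exists h : Hom Z (S (lolli X Y)), comp pi0 h = cur f0 /\ comp pi1 h = cur f1);
  Sw : forall {X Y : Obj}, Hom (withO (S X) (S Y)) (S (withO X Y));
  Sw_iso1 : forall X Y, comp (pair (SM p0) (SM p1)) (Sw (X:=X) (Y:=Y)) = idm;
  Sw_iso2 : forall X Y, comp (Sw (X:=X) (Y:=Y)) (pair (SM p0) (SM p1)) = idm;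
  Stop_uniq : forall X (f g : Hom X (S top)), f = g;

  (* derived morphisms of the summability structure (their existence is
     a consequence of the axioms in Ehrhard's theory) *)
  thk : forall {X : Obj}, Hom (S (S X)) (S X);
  thk_p0 : forall X, comp pi0 (thk (X:=X)) = comp pi1 pi0;
  thk_p1 : forall X, comp pi1 (thk (X:=X)) = comp pi0 pi1;
  theta : forall {X : Obj}, Hom (S (S X)) (S X);
  theta_p0 : forall X, comp pi0 (theta (X:=X)) = comp pi0 pi0;
  theta_p1 : forall X, comp pi1 (theta (X:=X)) = comp sig thk;
  swap : forall {X : Obj}, Hom (S (S X)) (S (S X));
  swap_p0 : forall X, comp pi0 (swap (X:=X)) = SM pi0;
  swap_p1 : forall X, comp pi1 (swap (X:=X)) = SM pi1;
  Lk : forall {X Y : Obj}, Hom (tens (S X) (S Y)) (S (tens X Y));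
  Lk_p0 : forall X Y, comp pi0 (Lk (X:=X) (Y:=Y)) = tensM pi0 pi1;
  Lk_p1 : forall X Y, comp pi1 (Lk (X:=X) (Y:=Y)) = tensM pi1 pi0;
  Ltens : forall {X Y : Obj}, Hom (tens (S X) (S Y)) (S (tens X Y));
  Ltens_p0 : forall X Y, comp pi0 (Ltens (X:=X) (Y:=Y)) = tensM pi0 pi0;
  Ltens_p1 : forall X Y, comp pi1 (Ltens (X:=X) (Y:=Y)) = comp sig Lk;

  dd : forall {X : Obj}, Hom (bang (S X)) (S (bang X));
  dd_nat : forall X Y (f : Hom X Y), comp dd (bangM (SM f)) = comp (SM (bangM f)) dd;
  dd_local : forall X, comp pi0 (dd (X:=X)) = bangM pi0;
  dd_lin0 : forall X, comp (dd (X:=X)) (bangM iota0) = iota0;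
  dd_lin : forall X, comp (dd (X:=X)) (bangM theta) = comp theta (comp (SM dd) dd);
  dd_chain_der : forall X, comp (SM der) (dd (X:=X)) = der;
  dd_chain_dig : forall X, comp (SM dig) (dd (X:=X)) = comp dd (comp (bangM dd) dig);
  dd_with_top : dd (X:=top) = comp iota0 (bangM term);
  dd_with : forall X Y,
      dd (X:=withO X Y)
      = comp (SM m2) (comp Ltens (comp (tensM dd dd) (comp m2i (bangM (pair (SM p0) (SM p1))))));
  dd_schwarz : forall X,
      comp swap (comp (SM dd) (dd (X:=S X))) = comp (SM dd) (comp dd (bangM swap))
}.

Arguments Hom : clear implicits.
Arguments tens : clear implicits.
Arguments lolli : clear implicits.
Arguments withO : clear implicits.
Arguments bang : clear implicits.
Arguments S : clear implicits.
Arguments top : clear implicits.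
Arguments unitO : clear implicits.
Arguments comp {c X Y Z} _ _.
Arguments idm {c X}.
Arguments tensM {c A B C D} _ _.
Arguments alpha {c A B C}.
Arguments alphai {c A B C}.
Arguments lunit {c A}.
Arguments runit {c A}.
Arguments gam {c A B}.
Arguments ev {c A B}.
Arguments cur {c C A B} _.
Arguments p0 {c X Y}.
Arguments p1 {c X Y}.
Arguments pair {c Z X Y} _ _.
Arguments term {c X}.
Arguments bangM {c X Y} _.
Arguments der {c X}.
Arguments dig {c X}.
Arguments m2 {c X Y}.
Arguments m2i {c X Y}.
Arguments zero {c X Y}.
Arguments SM {c X Y} _.
Arguments pi0 {c X}.
Arguments pi1 {c X}.
Arguments sig {c X}.
Arguments iota0 {c X}.
Arguments Sw {c X Y}.
Arguments dd {c X}.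

Section Kleisli.
Variable L : CDSRC.

Definition Kcomp {X Y Z : Obj L} (g : Hom L (bang L Y) Z) (f : Hom L (bang L X) Y)
  : Hom L (bang L X) Z := comp g (comp (bangM f) dig).

Definition klam {X Y : Obj L} (h : Hom L X Y) : Hom L (bang L X) Y := comp h der.

Definition Kid (X : Obj L) : Hom L (bang L X) X := klam idm.

Definition Arrow (X Y : Obj L) : Obj L := lolli L (bang L X) Y.

Definition Ev (X Y : Obj L) : Hom L (bang L (withO L (Arrow X Y) X)) Y :=
  comp ev (comp (tensM der idm) m2i).

Definition Cur {Z X Y : Obj L} (f : Hom L (bang L (withO L Z X)) Y)
  : Hom L (bang L Z) (Arrow X Y) := cur (comp f m2).

Definition Dk {X Y : Obj L} (f : Hom L (bang L X) Y) : Hom L (bang L (S L X)) (S L Y) :=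
  comp (SM f) dd.

Definition psi0 (X0 X1 : Obj L)
  : Hom L (bang L (withO L (S L X0) X1)) (S L (withO L X0 X1)) :=
  klam (comp Sw (pair p0 (comp iota0 p1))).

Definition D0 {Z X Y : Obj L} (f : Hom L (bang L (withO L Z X)) Y)
  : Hom L (bang L (withO L (S L Z) X)) (S L Y) := Kcomp (Dk f) (psi0 Z X).

Definition Phi (X Y : Obj L) : Hom L (bang L (S L (Arrow X Y))) (Arrow X (S L Y)) :=
  Cur (Kcomp (Dk (Ev X Y)) (psi0 (Arrow X Y) X)).

Definition functional_summability : Prop :=
  forall X Y : Obj L, exists Psi : Hom L (bang L (Arrow X (S L Y))) (S L (Arrow X Y)),
    Kcomp Psi (Phi X Y) = Kid _ /\ Kcomp (Phi X Y) Psi = Kid _.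

End Kleisli.


(* Naturality of currying in the Kleisli category turns [Phi ∘ D(Cur f)] into
   [Cur (D Ev ∘ psi0 ∘ (D(Cur f) & X))].  The map [psi0] is natural in its
   first argument, so this is [Cur (D Ev ∘ D(Cur f & X) ∘ psi0)]; by the chain
   rule [D] is a functor, and the beta rule [Ev ∘ (Cur f & X) = f] leaves
   [Cur (D f ∘ psi0) = Cur (D0 f)]. *)

Section KleisliCalculus.
Variable L : CDSRC.
Local Notation "g ∘ f" := (@comp L _ _ _ g f) (at level 40, left associativity).

Definition prom {X Y : Obj L} (f : Hom L (bang L X) Y) : Hom L (bang L X) (bang L Y) :=
  bangM f ∘ dig.

Definition Kwith {U V U' V' : Obj L} (a : Hom L (bang L U) U') (b : Hom L (bang L V) V')
  : Hom L (bang L (withO L U V)) (withO L U' V') :=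
  pair (a ∘ bangM p0) (b ∘ bangM p1).

Lemma comp_pair A B C D (a : Hom L B C) (b : Hom L B D) (c : Hom L A B) :
  pair a b ∘ c = pair (a ∘ c) (b ∘ c).
Proof.
  rewrite <- (pair_eta (pair a b ∘ c)), comp_assoc, pair_p0, comp_assoc, pair_p1.
  reflexivity.
Qed.

Lemma cur_nat A B C D (h : Hom L (tens L B C) D) (k : Hom L A B) :
  cur h ∘ k = cur (h ∘ tensM k idm).
Proof.
  assert (Hsplit : tensM (cur h ∘ k) (@idm L C) = tensM (cur h) idm ∘ tensM k idm).
  { rewrite <- tensM_comp, comp_idl. reflexivity. }
  rewrite <- (cur_eta (cur h ∘ k)), Hsplit, comp_assoc, cur_beta.
  reflexivity.
Qed.

Lemma prom_Kid X : prom (Kid X) = idm.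
Proof. unfold prom, Kid, klam. rewrite comp_idl. apply comonad_2. Qed.

Lemma prom_Kwith U V U' V' (a : Hom L (bang L U) U') (b : Hom L (bang L V) V') :
  prom (Kwith a b) = m2 ∘ tensM (prom a) (prom b) ∘ m2i.
Proof.
  unfold prom, Kwith.
  assert (Hfactor : pair (a ∘ bangM p0) (b ∘ bangM p1)
                    = pair (a ∘ p0) (b ∘ p1) ∘ pair (bangM p0) (bangM p1)).
  { rewrite comp_pair, <- !comp_assoc, pair_p0, pair_p1. reflexivity. }
  assert (Hseely : bangM (pair (bangM p0) (bangM p1)) ∘ dig
                   = m2 ∘ tensM dig dig ∘ (@m2i L U V)).
  { rewrite <- seely_dig, <- !comp_assoc, m2_iso2, comp_idr. reflexivity. }
  rewrite Hfactor, bangM_comp, <- comp_assoc, Hseely, !comp_assoc, <- m2_nat,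
    tensM_comp, !comp_assoc.
  reflexivity.
Qed.

Lemma prom_Kwith_m2 U V U' V' (a : Hom L (bang L U) U') (b : Hom L (bang L V) V') :
  prom (Kwith a b) ∘ m2 = m2 ∘ tensM (prom a) (prom b).
Proof. rewrite prom_Kwith, <- comp_assoc, m2_iso1, comp_idr. reflexivity. Qed.

Lemma Kcomp_assoc A B C D (h : Hom L (bang L C) D) (g : Hom L (bang L B) C)
  (f : Hom L (bang L A) B) :
  Kcomp (Kcomp h g) f = Kcomp h (Kcomp g f).
Proof.
  unfold Kcomp. rewrite !bangM_comp, !comp_assoc.
  rewrite <- (comp_assoc dig (bangM dig)), <- comonad_3, comp_assoc.
  rewrite <- (comp_assoc dig (bangM (bangM f))), <- dig_nat, !comp_assoc.
  reflexivity.
Qed.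

Lemma Dk_Kcomp A B C (g : Hom L (bang L B) C) (h : Hom L (bang L A) B) :
  Dk (Kcomp g h) = Kcomp (Dk g) (Dk h).
Proof.
  unfold Dk, Kcomp. rewrite !SM_comp, !bangM_comp.
  rewrite <- !comp_assoc, dd_chain_dig, !comp_assoc, <- (comp_assoc dd), <- dd_nat,
    !comp_assoc.
  reflexivity.
Qed.

Lemma Kcomp_Cur Z Z' X Y (g : Hom L (bang L (withO L Z X)) Y) (c : Hom L (bang L Z') Z) :
  Kcomp (Cur g) c = Cur (Kcomp g (Kwith c (Kid X))).
Proof.
  unfold Kcomp, Cur, Arrow.
  change (bangM c ∘ dig) with (prom c).
  change (bangM (Kwith c (Kid X)) ∘ dig) with (prom (Kwith c (Kid X))).
  rewrite cur_nat, <- !comp_assoc, prom_Kwith_m2, prom_Kid.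
  reflexivity.
Qed.

Lemma Ev_Kwith_Cur Z X Y (f : Hom L (bang L (withO L Z X)) Y) :
  Kcomp (Ev X Y) (Kwith (Cur f) (Kid X)) = f.
Proof.
  unfold Kcomp, Ev.
  change (bangM (Kwith (Cur f) (Kid X)) ∘ dig) with (prom (Kwith (Cur f) (Kid X))).
  rewrite prom_Kwith, prom_Kid, !comp_assoc, <- (comp_assoc m2 m2i), m2_iso1, comp_idr,
    <- (comp_assoc (tensM _ _) (tensM der idm)), <- tensM_comp, comp_idl.
  assert (Hder : der ∘ prom (Cur f) = Cur f).
  { unfold prom. rewrite comp_assoc, der_nat, <- comp_assoc, comonad_1, comp_idr.
    reflexivity. }
  unfold Cur, Arrow in *.
  rewrite Hder, cur_beta, <- comp_assoc, m2_iso2, comp_idr.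
  reflexivity.
Qed.

Lemma SM_p0_Sw A B : SM p0 ∘ (@Sw L A B) = p0.
Proof.
  rewrite <- (pair_p0 (SM (@p0 L A B)) (SM p1)), <- comp_assoc, Sw_iso1, comp_idr.
  reflexivity.
Qed.

Lemma SM_p1_Sw A B : SM p1 ∘ (@Sw L A B) = p1.
Proof.
  rewrite <- (pair_p1 (SM (@p0 L A B)) (SM p1)), <- comp_assoc, Sw_iso1, comp_idr.
  reflexivity.
Qed.

Lemma S_with_ext A B C (u v : Hom L A (S L (withO L B C))) :
  SM p0 ∘ u = SM p0 ∘ v -> SM p1 ∘ u = SM p1 ∘ v -> u = v.
Proof.
  intros H0 H1.
  rewrite <- (comp_idl u), <- (comp_idl v), <- (Sw_iso2 B C), <- !comp_assoc,
    !comp_pair, H0, H1.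
  reflexivity.
Qed.

Lemma psi0_natural Z X A (c : Hom L (bang L Z) A) :
  Kcomp (psi0 A X) (Kwith (Dk c) (Kid X)) = Kcomp (Dk (Kwith c (Kid X))) (psi0 Z X).
Proof.
  unfold Kcomp, psi0, Dk, Kwith, Kid, klam.
  rewrite !comp_idl, !comp_assoc, <- (comp_assoc (bangM _) der), der_nat, comp_assoc,
    <- (comp_assoc dig der), comonad_1, comp_idr, bangM_comp, !comp_assoc,
    <- (comp_assoc dig (bangM der)), comonad_2, comp_idr.
  (* The [Z]-components agree by naturality of [dd]; the [X]-components by the
     chain rule [dd_chain_der], i.e. [X] is differentiated as a linear argument. *)
  apply S_with_ext; rewrite !comp_assoc.
  - rewrite SM_p0_Sw, !pair_p0, <- SM_comp, pair_p0, SM_comp,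
      <- (comp_assoc dd (SM (bangM p0))), <- dd_nat, comp_assoc,
      <- (comp_assoc (bangM _) (bangM (SM p0))), <- bangM_comp, comp_assoc, SM_p0_Sw,
      pair_p0.
    reflexivity.
  - rewrite SM_p1_Sw, !pair_p1, <- SM_comp, pair_p1, !SM_comp,
      <- (comp_assoc dd (SM (bangM p1))), <- dd_nat, comp_assoc, dd_chain_der,
      <- (comp_assoc (bangM _) (bangM (SM p1))), <- bangM_comp, comp_assoc, SM_p1_Sw,
      pair_p1, <- (comp_assoc (pair _ _) p1), pair_p1, !der_nat, !comp_assoc.
    reflexivity.
Qed.

End KleisliCalculus.

Theorem mainTheorem8 (L : CDSRC) (HFS : functional_summability L)
  (Z X Y : Obj L) (f : Hom L (bang L (withO L Z X)) Y) :
  Kcomp (Phi X Y) (Dk (Cur f)) = Cur (D0 f).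
Proof.
  unfold Phi, D0.
  rewrite Kcomp_Cur, Kcomp_assoc, psi0_natural, <- Kcomp_assoc, <- Dk_Kcomp,
    Ev_Kwith_Cur.
  reflexivity.
Qed.
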